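(* Let $M$ be an abelian group of exponent greater than $2$. Then for the loop $L_M$: $N_\lambda(L_M)=\{(A,x)\in L_M : x^2=1\}$, $N_\mu(L_M)=N_\rho(L_M)=\{(1,x): x\in M\}$, and $Z(L_M)=N(L_M)=C(L_M)=\{(1,x): x\in M,\ x^2=1\}$.
   Context: Let $K=\{1,a,b,c\}$ be the Klein four-group. Set $L_M=K\times M$ with the operation $(A,x)*(B,y)=(AB,xy)$ if $B=1$, and $(A,x)*(B,y)=(AB,x^{-1}y)$ if $B\neq 1$. For a loop $L$: the left nucleus is $N_\lambda(L)=\{u:(uy)z=u(yz)\ \forall y,z\}$, the middle nucleus $N_\mu(L)=\{u:(xu)z=x(uz)\ \forall x,z\}$, the right nucleus $N_\rho(L)=\{u:(xy)u=x(yu)\ \forall x,y\}$, the nucleus $N(L)=N_\lambda\cap N_\mu\cap N_\rho$, the commutant $C(L)=\{u: ux=xu\ \forall x\}$, and the center $Z(L)=N(L)\cap C(L)$. *)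

(* The abelian group M (possibly infinite) is a zmodType,
   written additively: x^2 = 1 becomes x + x = 0, x^{-1} y becomes -x + y. *)
From mathcomp Require Import all_boot all_order all_algebra.
Set Implicit Arguments. Unset Strict Implicit. Unset Printing Implicit Defensive.
Import GRing.Theory.
Local Open Scope ring_scope.

Inductive K4 := K1 | Ka | Kb | Kc.

Definition K4mul (A B : K4) : K4 :=
  match A, B with
  | K1, X => X
  | X, K1 => X
  | Ka, Ka => K1 | Kb, Kb => K1 | Kc, Kc => K1
  | Ka, Kb => Kc | Kb, Ka => Kc
  | Ka, Kc => Kb | Kc, Ka => Kb
  | Kb, Kc => Ka | Kc, Kb => Ka
  end.

Definition LM_op (M : zmodType) (p q : K4 * M) : K4 * M :=
  let: (A, x) := p in let: (B, y) := q in
  match B with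
  | K1 => (K4mul A B, x + y)
  | _ => (K4mul A B, - x + y)
  end.

Section LoopNotions.
Variables (T : Type) (op : T -> T -> T).
Definition left_nucleus (u : T) : Prop :=
  forall y z, op (op u y) z = op u (op y z).
Definition middle_nucleus (u : T) : Prop :=
  forall x z, op (op x u) z = op x (op u z).
Definition right_nucleus (u : T) : Prop :=
  forall x y, op (op x y) u = op x (op y u).
Definition nucleus (u : T) : Prop :=
  [/\ left_nucleus u, middle_nucleus u & right_nucleus u].
Definition commutant (u : T) : Prop := forall x, op u x = op x u.
Definition center (u : T) : Prop := nucleus u /\ commutant u.
End LoopNotions.

(* Write the product as (A, x) (B, y) = (AB, s_B x + y), where s_1 is the
   identity and s_B is negation for B <> 1.  The two bracketings of
   (A, x) (B, y) (C, z) then agree except for s_C (s_B x) against s_(BC) x,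
   and these differ exactly when B, C and BC are all nonidentity and -x <> x.
   So (A, x) lies in the left nucleus iff 2x = 0, whereas a middle or right
   factor (B, y) with B <> 1 breaks associativity as soon as the left factor
   is (1, x0) with 2 x0 <> 0 and the remaining factor is (C, 0) with C, BC
   nonidentity.  The same x0, and the element (a, 0), detect the commutant. *)
From mathcomp Require Import all_boot all_order all_algebra.
Set Implicit Arguments.
Unset Strict Implicit.
Import GRing.Theory.
Local Open Scope ring_scope.

Section LoopLM.
Variable M : zmodType.
Local Notation op := (@LM_op M).

Lemma oppr_eq_self (x : M) : - x = x <-> x + x = 0.
Proof.
by split=> [Nx | /eqP]; [rewrite -{1}Nx addNr | rewrite addr_eq0 => /eqP <-].
Qed.

Lemma left_nucleus_LM (u : K4 * M) : left_nucleus op u <-> u.2 + u.2 = 0.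
Proof.
case: u => A x /=; split=> [lnu | /oppr_eq_self Nx [B y] [C z]].
  apply/oppr_eq_self; move/(congr1 snd): (lnu (Ka, 0) (Kb, 0)).
  by rewrite /= !addr0 oppr0 addr0 opprK.
by case: A; case: B; case: C => /=; congr pair;
  rewrite ?opprD ?opprK ?Nx ?addrA.
Qed.

Lemma middle_nucleus_K1 (x : M) : middle_nucleus op (K1, x).
Proof.
move=> [A y] [C z].
by case: A; case: C => /=; congr pair; rewrite ?opprD ?opprK ?addrA.
Qed.

Lemma right_nucleus_K1 (x : M) : right_nucleus op (K1, x).
Proof.
move=> [A y] [B z].
by case: A; case: B => /=; congr pair; rewrite ?opprD ?opprK ?addrA.
Qed.

Lemma commutant_K1 (x : M) : - x = x -> commutant op (K1, x).
Proof. by move=> Nx [B y]; case: B => /=; congr pair; rewrite ?Nx addrC. Qed.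

Section ExponentGt2.
Variable x0 : M.
Hypothesis x0_order_gt2 : x0 + x0 != 0.

Lemma addr_neq_oppr (y : M) : x0 + y != - x0 + y.
Proof.
apply: contra x0_order_gt2 => /eqP /addIr Nx0.
by apply/eqP/oppr_eq_self.
Qed.

Lemma middle_nucleus_LM (u : K4 * M) : middle_nucleus op u <-> u.1 = K1.
Proof.
case: u => B y /=; split=> [|->]; last exact: middle_nucleus_K1.
case: B => // mnu;
  [have := mnu (K1, x0) (Kb, 0) | have := mnu (K1, x0) (Ka, 0)
  | have := mnu (K1, x0) (Ka, 0)];
  move/(congr1 snd) => /=; rewrite !addr0 opprD opprK => /eqP;
  by rewrite (negbTE (addr_neq_oppr _)).
Qed.

Lemma right_nucleus_LM (u : K4 * M) : right_nucleus op u <-> u.1 = K1.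
Proof.
case: u => C z /=; split=> [|->]; last exact: right_nucleus_K1.
case: C => // rnu;
  [have := rnu (K1, x0) (Kb, 0) | have := rnu (K1, x0) (Ka, 0)
  | have := rnu (K1, x0) (Ka, 0)];
  move/(congr1 snd) => /=; rewrite addr0 opprK oppr0 add0r => /eqP;
  by rewrite (negbTE (addr_neq_oppr _)).
Qed.

Lemma commutant_LM (u : K4 * M) :
  commutant op u <-> u.1 = K1 /\ u.2 + u.2 = 0.
Proof.
case: u => A x /=; split=> [cu | [-> /oppr_eq_self]]; last exact: commutant_K1.
have A1 : A = K1.
  case: A cu => // cu; move/(congr1 snd): (cu (K1, x0)) => /= /eqP;
  by rewrite [x + x0]addrC (negbTE (addr_neq_oppr _)).
subst A; split=> //; apply/oppr_eq_self.
by move/(congr1 snd): (cu (Ka, 0)); rewrite /= addr0 add0r.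
Qed.

Lemma nucleus_LM (u : K4 * M) : nucleus op u <-> u.1 = K1 /\ u.2 + u.2 = 0.
Proof.
split=> [[/left_nucleus_LM ? /middle_nucleus_LM ? _] | [? ?]] //.
split.
- exact/left_nucleus_LM.
- exact/middle_nucleus_LM.
- exact/right_nucleus_LM.
Qed.

Lemma center_LM (u : K4 * M) : center op u <-> u.1 = K1 /\ u.2 + u.2 = 0.
Proof. by split=> [[/nucleus_LM]|/[dup] /nucleus_LM ? /commutant_LM]. Qed.

End ExponentGt2.
End LoopLM.

Theorem proposition3p6 (M : zmodType) (hexp : exists x : M, x + x != 0) :
  (forall u : K4 * M, left_nucleus (@LM_op M) u <-> u.2 + u.2 = 0) /\
  (forall u : K4 * M, middle_nucleus (@LM_op M) u <-> u.1 = K1) /\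
  (forall u : K4 * M, right_nucleus (@LM_op M) u <-> u.1 = K1) /\
  (forall u : K4 * M, center (@LM_op M) u <-> u.1 = K1 /\ u.2 + u.2 = 0) /\
  (forall u : K4 * M, nucleus (@LM_op M) u <-> u.1 = K1 /\ u.2 + u.2 = 0) /\
  (forall u : K4 * M, commutant (@LM_op M) u <-> u.1 = K1 /\ u.2 + u.2 = 0).
Proof.
case: hexp => x0 hx0.
split; first exact: left_nucleus_LM.
split; first exact: middle_nucleus_LM hx0.
split; first exact: right_nucleus_LM hx0.
split; first exact: center_LM hx0.
by split; [exact: nucleus_LM hx0 | exact: commutant_LM hx0].
Qed.
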